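(* Let ${}^*$ be a nonstandard enlargement. Then there is an infinite nonstandard natural number $k\in{}^*\mathbb N$ such that ${}^*\sin(kt)$ is infinitesimal for all standard reals $t$.
   Context: A nonstandard universe is an embedding ${}^*$ of the superstructure $V(X)$ over a base set $X\supseteq\mathbb R$ into a superstructure $V(Y)$ with ${}^*X=Y$, ${}^*x=x$ for $x\in X$, $A\subsetneq{}^*A$ for every infinite $A\subseteq X$, satisfying transfer for bounded ($\Sigma_0$) formulas. A set $B\in V(Y)$ is hyperfinite if $B\in{}^*P^{\mathrm{fin}}(A)$ for some $A\in V(X)$, where $P^{\mathrm{fin}}(A)$ is the set of finite subsets of $A$. The universe is an enlargement if for every $A\in V(X)\setminus X$ there is a hyperfinite $B$ with $\{{}^*a:a\in A\}\subseteq B$. A nonstandard natural number is infinite if it is not standard; a nonstandard real is infinitesimal if its absolute value is below every standard $1/n$. *)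

From Stdlib Require Import Reals List.
Open Scope R_scope.

(** * Hereditary sets over a type of atoms (Aczel-style, with atoms).
    Sets are given by an indexed family of members; equality is
    extensional ([eqS]), membership is [mem]. *)
Inductive HS (A : Type) : Type :=
| atom : A -> HS A
| hset : forall I : Type, (I -> HS A) -> HS A.
Arguments atom {A} _.
Arguments hset {A I} _.

Fixpoint eqS {A : Type} (a b : HS A) {struct a} : Prop :=
  match a with
  | atom x => match b with atom y => x = y | hset _ => False end
  | hset f => match b with
              | atom _ => False
              | hset g => (forall i, exists j, eqS (f i) (g j)) /\
                          (forall j, exists i, eqS (f i) (g j))
              end
  end.

Definition mem {A : Type} (x s : HS A) : Prop :=
  match s with atom _ => False | hset f => exists i, eqS x (f i) end.

Definition subS {A : Type} (s t : HS A) : Prop := forall y, mem y s -> mem y t.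
Definition is_atom {A : Type} (x : HS A) : Prop := exists a, eqS x (atom a).
Definition emptyS {A : Type} : HS A := hset (fun e : Empty_set => match e with end).
Definition sing {A : Type} (a : HS A) : HS A := hset (fun _ : unit => a).
Definition upair {A : Type} (a b : HS A) : HS A :=
  hset (fun t : bool => if t then a else b).
Definition kpair {A : Type} (a b : HS A) : HS A := upair (sing a) (upair a b).

Definition atoms (A : Type) : HS A := hset (fun a : A => atom a).

(** * The superstructure levels: V_0 = A, V_(n+1) = V_n ∪ P(V_n). *)
Fixpoint lvlIdx (A : Type) (n : nat) : Type :=
  match n with
  | O => A
  | S m => (lvlIdx A m + (lvlIdx A m -> Prop))%type
  end.

Fixpoint lvl (A : Type) (n : nat) {struct n} : lvlIdx A n -> HS A :=
  match n as n0 return lvlIdx A n0 -> HS A with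
  | O => fun a => atom a
  | S m => fun i => match i with
                    | inl j => lvl A m j
                    | inr P => hset (fun s : {j : lvlIdx A m | P j} => lvl A m (proj1_sig s))
                    end
  end.

Definition Vn (A : Type) (n : nat) : HS A := hset (lvl A n).
Definition inV {A : Type} (x : HS A) : Prop := exists n, mem x (Vn A n).

Definition finS {A : Type} (s : HS A) : Prop :=
  exists l : list (HS A), forall y, mem y s <-> exists z, In z l /\ eqS y z.
Definition subAtoms {A : Type} (s : HS A) : Prop := forall y, mem y s -> is_atom y.

Definition Pfin {A : Type} (s : HS A) : HS A :=
  match s with
  | atom _ => sing emptyS
  | hset f => hset (fun l : list _ => hset (fun p : {i | In i l} => f (proj1_sig p)))
  end.

Definition img {A B : Type} (st : HS A -> HS B) (s : HS A) : HS B :=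
  match s with
  | atom _ => emptyS
  | hset f => hset (fun i => st (f i))
  end.

(** * Bounded (Σ0) formulas of the language {∈, =} with constants, de Bruijn variables *)
Inductive tm (C : Type) : Type :=
| tvar : nat -> tm C
| tcst : C -> tm C.
Arguments tvar {C} _.
Arguments tcst {C} _.

Inductive fm (C : Type) : Type :=
| fMem : tm C -> tm C -> fm C
| fEq  : tm C -> tm C -> fm C
| fNot : fm C -> fm C
| fAnd : fm C -> fm C -> fm C
| fOr  : fm C -> fm C -> fm C
| fImp : fm C -> fm C -> fm C
| fAll : tm C -> fm C -> fm C   (* ∀ x ∈ t, φ  (x = variable 0 in φ) *)
| fEx  : tm C -> fm C -> fm C.
Arguments fMem {C} _ _. Arguments fEq {C} _ _. Arguments fNot {C} _.
Arguments fAnd {C} _ _. Arguments fOr {C} _ _. Arguments fImp {C} _ _.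
Arguments fAll {C} _ _. Arguments fEx {C} _ _.

Definition tm_map {C D : Type} (g : C -> D) (t : tm C) : tm D :=
  match t with tvar n => tvar n | tcst c => tcst (g c) end.

Fixpoint fm_map {C D : Type} (g : C -> D) (p : fm C) : fm D :=
  match p with
  | fMem a b => fMem (tm_map g a) (tm_map g b)
  | fEq a b => fEq (tm_map g a) (tm_map g b)
  | fNot q => fNot (fm_map g q)
  | fAnd q r => fAnd (fm_map g q) (fm_map g r)
  | fOr q r => fOr (fm_map g q) (fm_map g r)
  | fImp q r => fImp (fm_map g q) (fm_map g r)
  | fAll t q => fAll (tm_map g t) (fm_map g q)
  | fEx t q => fEx (tm_map g t) (fm_map g q)
  end.

Definition tm_ok {C : Type} (P : C -> Prop) (k : nat) (t : tm C) : Prop :=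
  match t with tvar n => (n < k)%nat | tcst c => P c end.

Fixpoint fm_ok {C : Type} (P : C -> Prop) (k : nat) (p : fm C) : Prop :=
  match p with
  | fMem a b | fEq a b => tm_ok P k a /\ tm_ok P k b
  | fNot q => fm_ok P k q
  | fAnd q r | fOr q r | fImp q r => fm_ok P k q /\ fm_ok P k r
  | fAll t q | fEx t q => tm_ok P k t /\ fm_ok P (S k) q
  end.

Definition scons {A : Type} (x : A) (e : nat -> A) : nat -> A :=
  fun n => match n with O => x | S m => e m end.

Definition tm_eval {A : Type} (e : nat -> HS A) (t : tm (HS A)) : HS A :=
  match t with tvar n => e n | tcst c => c end.

Fixpoint sat {A : Type} (e : nat -> HS A) (p : fm (HS A)) : Prop :=
  match p with
  | fMem a b => mem (tm_eval e a) (tm_eval e b)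
  | fEq a b => eqS (tm_eval e a) (tm_eval e b)
  | fNot q => ~ sat e q
  | fAnd q r => sat e q /\ sat e r
  | fOr q r => sat e q \/ sat e r
  | fImp q r => sat e q -> sat e r
  | fAll t q => forall y, mem y (tm_eval e t) -> sat (scons y e) q
  | fEx t q => exists y, mem y (tm_eval e t) /\ sat (scons y e) q
  end.

Definition transfer {X Y : Type} (star : HS X -> HS Y) : Prop :=
  forall p : fm (HS X), fm_ok inV 0 p ->
    (sat (fun _ => emptyS) p <-> sat (fun _ => emptyS) (fm_map star p)).

(** * Nonstandard universes and enlargements.
    [iX : X -> Y] realizes the inclusion X ⊆ Y; [star] is the map V(X) -> V(Y). *)
Definition nonstandard_universe {X Y : Type} (iX : X -> Y) (star : HS X -> HS Y) : Prop :=
  (forall x y, iX x = iX y -> x = y) /\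
  (forall a, inV a -> inV (star a)) /\
  eqS (star (atoms X)) (atoms Y) /\
  (forall x, eqS (star (atom x)) (atom (iX x))) /\
  (forall A, inV A -> subAtoms A -> ~ finS A ->
     subS (img star A) (star A) /\ exists y, mem y (star A) /\ ~ mem y (img star A)) /\
  transfer star.

Definition hyperfinite {X Y : Type} (star : HS X -> HS Y) (B : HS Y) : Prop :=
  exists A, inV A /\ mem B (star (Pfin A)).

Definition enlargement {X Y : Type} (iX : X -> Y) (star : HS X -> HS Y) : Prop :=
  nonstandard_universe iX star /\
  forall A, inV A -> ~ is_atom A ->
    exists B, hyperfinite star B /\ subS (img star A) B.

Section RealStructure.
Context {X : Type} (rX : R -> X).
Definition rS (r : R) : HS X := atom (rX r).
Definition NatS : HS X := hset (fun n : nat => rS (INR n)).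
Definition graph1 (f : R -> R) : HS X := hset (fun r : R => kpair (rS r) (rS (f r))).
Definition graph2 (g : R -> R -> R) : HS X :=
  hset (fun p : (R * R)%type => kpair (kpair (rS (fst p)) (rS (snd p))) (rS (g (fst p) (snd p)))).
Definition ltS : HS X :=
  hset (fun p : {p : (R * R)%type | fst p < snd p} =>
          kpair (rS (fst (proj1_sig p))) (rS (snd (proj1_sig p)))).
Definition sinS : HS X := graph1 sin.
Definition absS : HS X := graph1 Rabs.
Definition mulS : HS X := graph2 Rmult.
End RealStructure.

Definition appS {A : Type} (F a b : HS A) : Prop := mem (kpair a b) F.

Definition infinitesimal {X Y : Type} (rX : R -> X) (star : HS X -> HS Y) (v : HS Y) : Prop :=
  forall n : nat, (0 < n)%nat ->
    exists w, appS (star (absS rX)) v w /\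
              mem (kpair w (star (rS rX (/ INR n)))) (star (ltS rX)).

From Stdlib Require Import Reals List Lra Lia ZArith Classical ClassicalEpsilon.
Open Scope R_scope.

(* Idea: a condition is a pair (t, e) of standard reals with e > 0, and a natural
   number k solves it when k <> t and |sin (k t)| < e.  Finitely many conditions are
   solved by one standard k: Dirichlet's simultaneous approximation gives arbitrarily
   large k with every k t / 2π within e / 2π of an integer.  "Every finite set of
   conditions has a solution in N" is a bounded sentence, so by transfer every
   hyperfinite set of internal conditions has a solution in *N.  In an enlargement some
   hyperfinite set contains all standard conditions; its solution k differs from every
   standard n (condition (n, 1)) and makes *sin (k t) smaller than every standard 1/n. *)

(** * Hereditary sets *)

Section HereditarySets.
Context {A : Type}.
Implicit Types a b c d s t x y z : HS A.

Lemma eqS_refl a : eqS a a.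
Proof.
  induction a as [x|I f IH]; simpl; auto.
  split; intro i; exists i; apply IH.
Qed.

Lemma eqS_sym a b : eqS a b -> eqS b a.
Proof.
  revert b; induction a as [x|I f IH]; intros [y|J g]; simpl; auto.
  intros [H1 H2]; split.
  - intro j; destruct (H2 j) as [i Hi]; exists i; apply IH; auto.
  - intro i; destruct (H1 i) as [j Hj]; exists j; apply IH; auto.
Qed.

Lemma eqS_trans a b c : eqS a b -> eqS b c -> eqS a c.
Proof.
  revert b c; induction a as [x|I f IH]; intros [y|J g] [z|K h]; simpl; try tauto.
  - intros; congruence.
  - intros [H1 H2] [H3 H4]; split.
    + intro i; destruct (H1 i) as [j Hj]; destruct (H3 j) as [k Hk].
      exists k; eapply IH; eauto.
    + intro k; destruct (H4 k) as [j Hj]; destruct (H2 j) as [i Hi].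
      exists i; eapply IH; eauto.
Qed.

Lemma mem_eqS_l x y s : eqS x y -> mem x s -> mem y s.
Proof.
  destruct s as [|I f]; simpl; auto.
  intros H [i Hi]; exists i; eapply eqS_trans; eauto using eqS_sym.
Qed.

Lemma mem_eqS_r x s t : eqS s t -> mem x s -> mem x t.
Proof.
  destruct s as [a|I f]; destruct t as [b|J g]; simpl; try tauto.
  intros [H1 _] [i Hi]; destruct (H1 i) as [j Hj]; exists j.
  eapply eqS_trans; eauto.
Qed.

Definition isSet s : Prop := match s with atom _ => False | hset _ => True end.

Lemma isSet_mem x s : mem x s -> isSet s.
Proof. destruct s; simpl; auto. Qed.

Lemma eqS_ext s t : isSet t ->
  eqS s t <-> isSet s /\ forall z, mem z s <-> mem z t.
Proof.
  destruct s as [a|I f]; destruct t as [b|J g]; simpl; try tauto.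
  intros _; split.
  - intros [H1 H2]; split; auto; intro z; split.
    + intros [i Hi]; destruct (H1 i) as [j Hj]; exists j; eapply eqS_trans; eauto.
    + intros [j Hj]; destruct (H2 j) as [i Hi]; exists i.
      eapply eqS_trans; eauto using eqS_sym.
  - intros [_ H]; split.
    + intro i; destruct (proj1 (H (f i))) as [j Hj]; [exists i; apply eqS_refl|].
      exists j; auto.
    + intro j; destruct (proj2 (H (g j))) as [i Hi]; [exists j; apply eqS_refl|].
      exists i; apply eqS_sym; auto.
Qed.

Lemma mem_sing z a : mem z (sing a) <-> eqS z a.
Proof. simpl; split; [intros [_ H]; auto | intro H; exists tt; auto]. Qed.

Lemma mem_upair z a b : mem z (upair a b) <-> eqS z a \/ eqS z b.
Proof.
  simpl; split.
  - intros [[|] H]; auto.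
  - intros [H|H]; [exists true|exists false]; auto.
Qed.

Lemma mem_upair_l a b : mem a (upair a b).
Proof. apply mem_upair; left; apply eqS_refl. Qed.

Lemma mem_upair_r a b : mem b (upair a b).
Proof. apply mem_upair; right; apply eqS_refl. Qed.

Lemma eqS_sing a c : eqS a c -> eqS (sing a) (sing c).
Proof. intros H; simpl; split; intros []; exists tt; auto. Qed.

Lemma eqS_upair a b c d : eqS a c -> eqS b d -> eqS (upair a b) (upair c d).
Proof.
  intros H1 H2; simpl; split; intros [|];
    [exists true|exists false|exists true|exists false]; auto.
Qed.

Lemma eqS_kpair a b c d : eqS a c -> eqS b d -> eqS (kpair a b) (kpair c d).
Proof. intros; apply eqS_upair; [apply eqS_sing|apply eqS_upair]; auto. Qed.

Lemma kpair_fst_eqS a b c d : eqS (kpair a b) (kpair c d) -> eqS a c.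
Proof.
  intros E.
  assert (Ha : mem (sing a) (kpair c d)) by exact (mem_eqS_r _ _ _ E (mem_upair_l _ _)).
  apply eqS_sym, mem_sing.
  apply mem_upair in Ha as [Ha|Ha]; apply (mem_eqS_r _ _ _ (eqS_sym _ _ Ha)).
  - apply mem_sing, eqS_refl.
  - apply mem_upair_l.
Qed.

Lemma kpair_snd_cases a b c d : eqS (kpair a b) (kpair c d) -> eqS d a \/ eqS d b.
Proof.
  intros E.
  assert (Hcd : mem (upair c d) (kpair a b))
    by exact (mem_eqS_r _ _ _ (eqS_sym _ _ E) (mem_upair_r _ _)).
  apply mem_upair in Hcd as [Hcd|Hcd].
  - left; apply mem_sing, (mem_eqS_r _ _ _ Hcd), mem_upair_r.
  - apply mem_upair, (mem_eqS_r _ _ _ Hcd), mem_upair_r.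
Qed.

Lemma kpair_inj a b c d : eqS (kpair a b) (kpair c d) -> eqS a c /\ eqS b d.
Proof.
  intros E.
  assert (Hac := kpair_fst_eqS _ _ _ _ E).
  split; [exact Hac|].
  destruct (kpair_snd_cases _ _ _ _ E) as [Hda|Hdb]; [|now apply eqS_sym].
  destruct (kpair_snd_cases _ _ _ _ (eqS_sym _ _ E)) as [Hbc|Hbd]; [|exact Hbd].
  apply eqS_trans with c; [exact Hbc|].
  apply eqS_trans with a; [now apply eqS_sym|now apply eqS_sym].
Qed.

End HereditarySets.

(** * Bounded formulas for pairs and function application *)

Definition lift {C : Type} (t : tm C) : tm C :=
  match t with tvar n => tvar (S n) | tcst c => tcst c end.

Definition fSing {C : Type} (y a : tm C) : fm C :=
  fAnd (fAll y (fEq (tvar 0) (lift a))) (fMem a y).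

Definition fUpair {C : Type} (y a b : tm C) : fm C :=
  fAnd (fAll y (fOr (fEq (tvar 0) (lift a)) (fEq (tvar 0) (lift b))))
       (fAnd (fMem a y) (fMem b y)).

Definition fPair {C : Type} (x a b : tm C) : fm C :=
  fAnd (fAll x (fOr (fSing (tvar 0) (lift a)) (fUpair (tvar 0) (lift a) (lift b))))
       (fAnd (fEx x (fSing (tvar 0) (lift a)))
             (fEx x (fUpair (tvar 0) (lift a) (lift b)))).

Definition fApp {C : Type} (F a r : tm C) : fm C :=
  fEx F (fPair (tvar 0) (lift a) (lift r)).

(* [<<k, a>, u> ∈ M], with [<k, a>] reached as a member of a member of the outer pair. *)
Definition fApp2 {C : Type} (M k a u : tm C) : fm C :=
  fEx M (fEx (tvar 0) (fEx (tvar 0)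
    (fAnd (fPair (tvar 0) (lift (lift (lift k))) (lift (lift (lift a))))
          (fPair (tvar 2) (tvar 0) (lift (lift (lift u))))))).

Arguments fSing : simpl never.
Arguments fUpair : simpl never.
Arguments fPair : simpl never.
Arguments fApp : simpl never.
Arguments fApp2 : simpl never.

Section Satisfaction.
Context {A : Type}.
Implicit Types (e : nat -> HS A) (t : tm (HS A)).

Lemma tm_eval_lift e y t : tm_eval (scons y e) (lift t) = tm_eval e t.
Proof. destruct t; reflexivity. Qed.

Lemma sat_fSing e y a : sat e (fSing y a) <-> eqS (tm_eval e y) (sing (tm_eval e a)).
Proof.
  unfold fSing; simpl; repeat setoid_rewrite tm_eval_lift.
  rewrite (eqS_ext _ (sing _) I); split.
  - intros [H1 H2]; split; [eapply isSet_mem; eauto|].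
    intro z; rewrite mem_sing; split; auto.
    intro Hz; apply eqS_sym in Hz; eapply mem_eqS_l; eauto.
  - intros [_ H]; split.
    + intros z Hz; apply mem_sing, H; auto.
    + apply H, mem_sing, eqS_refl.
Qed.

Lemma sat_fUpair e y a b :
  sat e (fUpair y a b) <-> eqS (tm_eval e y) (upair (tm_eval e a) (tm_eval e b)).
Proof.
  unfold fUpair; simpl; repeat setoid_rewrite tm_eval_lift.
  rewrite (eqS_ext _ (upair _ _) I); split.
  - intros [H1 [H2 H3]]; split; [eapply isSet_mem; eauto|].
    intro z; rewrite mem_upair; split; auto.
    intros [Hz|Hz]; apply eqS_sym in Hz; eapply mem_eqS_l; eauto.
  - intros [_ H]; split; [|split].
    + intros z Hz; apply mem_upair, H; auto.
    + apply H, mem_upair_l.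
    + apply H, mem_upair_r.
Qed.

Lemma sat_fPair e x a b :
  sat e (fPair x a b) <-> eqS (tm_eval e x) (kpair (tm_eval e a) (tm_eval e b)).
Proof.
  unfold fPair; cbn [sat]; setoid_rewrite sat_fSing; setoid_rewrite sat_fUpair.
  simpl; repeat setoid_rewrite tm_eval_lift.
  unfold kpair; rewrite (eqS_ext _ (upair _ _) I); split.
  - intros [H1 [[y1 [Hy1 E1]] [y2 [Hy2 E2]]]]; split; [eapply isSet_mem; eauto|].
    intro z; rewrite mem_upair; split; auto.
    intros [Hz|Hz].
    + eapply mem_eqS_l; [|exact Hy1]; eapply eqS_trans; eauto using eqS_sym.
    + eapply mem_eqS_l; [|exact Hy2]; eapply eqS_trans; eauto using eqS_sym.
  - intros [_ H]; split; [|split].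
    + intros z Hz; apply mem_upair, H; auto.
    + exists (sing (tm_eval e a)); split; [apply H, mem_upair_l|apply eqS_refl].
    + exists (upair (tm_eval e a) (tm_eval e b)); split; [apply H, mem_upair_r|apply eqS_refl].
Qed.

Lemma sat_fApp e F a r :
  sat e (fApp F a r) <-> appS (tm_eval e F) (tm_eval e a) (tm_eval e r).
Proof.
  unfold fApp, appS; cbn [sat tm_eval]; setoid_rewrite sat_fPair.
  simpl; repeat setoid_rewrite tm_eval_lift; split.
  - intros [x [Hx E]]; eapply mem_eqS_l; eauto.
  - destruct (tm_eval e F) as [|I f]; cbn [mem]; [tauto|].
    intros [i Hi]; exists (f i); split; [exists i; apply eqS_refl|apply eqS_sym; auto].
Qed.

Lemma sat_fApp2 e M k a u :
  sat e (fApp2 M k a u) <->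
  appS (tm_eval e M) (kpair (tm_eval e k) (tm_eval e a)) (tm_eval e u).
Proof.
  unfold fApp2, appS; cbn [sat tm_eval]; setoid_rewrite sat_fPair.
  simpl; repeat setoid_rewrite tm_eval_lift; split.
  - intros [x [Hx [y [Hy [p [Hp [E1 E2]]]]]]].
    eapply mem_eqS_l; [|exact Hx].
    eapply eqS_trans; [exact E2|apply eqS_kpair; [exact E1|apply eqS_refl]].
  - destruct (tm_eval e M) as [|I f]; cbn [mem]; [tauto|].
    intros [i Hi]; exists (f i); split; [exists i; apply eqS_refl|].
    exists (upair (kpair (tm_eval e k) (tm_eval e a)) (tm_eval e u)); split.
    + eapply mem_eqS_r; [exact Hi|apply mem_upair_r].
    + exists (kpair (tm_eval e k) (tm_eval e a)); split; [apply mem_upair_l|].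
      split; [apply eqS_refl|apply eqS_sym; auto].
Qed.

End Satisfaction.

(** * The finite-satisfiability sentence *)

Section Solvability.
Context {A : Type}.
Variables (reals mul sine abs less : HS A).

Definition solves (k a b : HS A) : Prop :=
  ~ eqS k a /\
  (exists u, mem u reals /\ exists v, mem v reals /\ appS mul (kpair k a) u /\ appS sine u v) /\
  (forall u, mem u reals -> forall v, mem v reals ->
     appS mul (kpair k a) u -> appS sine u v ->
     exists w, mem w reals /\ appS abs v w /\ mem (kpair w b) less).

(* The components [a], [b] of [c] are quantified over members [y] of [c] to keep the
   sentence bounded. *)
Definition solvable (fins nats conds : HS A) : Prop :=
  forall F, mem F fins -> exists k, mem k nats /\
    forall c, mem c F -> mem c conds ->
    forall y, mem y c -> forall a, mem a y -> forall b, mem b y ->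
    eqS c (kpair a b) -> solves k a b.

End Solvability.

Definition fSolves {C : Type} (reals mul sine abs less : C) (k a b : tm C) : fm C :=
  fAnd (fNot (fEq k a))
   (fAnd (fEx (tcst reals) (fEx (tcst reals)
            (fAnd (fApp2 (tcst mul) (lift (lift k)) (lift (lift a)) (tvar 1))
                  (fApp (tcst sine) (tvar 1) (tvar 0)))))
         (fAll (tcst reals) (fAll (tcst reals)
            (fImp (fApp2 (tcst mul) (lift (lift k)) (lift (lift a)) (tvar 1))
            (fImp (fApp (tcst sine) (tvar 1) (tvar 0))
               (fEx (tcst reals) (fAnd (fApp (tcst abs) (tvar 1) (tvar 0))
                                       (fApp (tcst less) (tvar 0) (lift (lift (lift b))))))))))).

Definition fSolvable {C : Type} (reals mul sine abs less fins nats conds : C) : fm C :=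
  fAll (tcst fins)
   (fEx (tcst nats)
     (fAll (tvar 1)
       (fImp (fMem (tvar 0) (tcst conds))
         (fAll (tvar 0) (fAll (tvar 0) (fAll (tvar 1)
           (fImp (fPair (tvar 3) (tvar 1) (tvar 0))
                 (fSolves reals mul sine abs less (tvar 4) (tvar 1) (tvar 0))))))))).

Arguments fSolves : simpl never.

Lemma sat_fSolves {A : Type} (e : nat -> HS A) reals mul sine abs less k a b :
  sat e (fSolves reals mul sine abs less k a b) <->
  solves reals mul sine abs less (tm_eval e k) (tm_eval e a) (tm_eval e b).
Proof.
  unfold fSolves, solves; cbn [sat tm_eval].
  setoid_rewrite sat_fApp2; setoid_rewrite sat_fApp; cbn [tm_eval].
  repeat setoid_rewrite tm_eval_lift; reflexivity.
Qed.

Lemma sat_fSolvable {A : Type} (e : nat -> HS A) reals mul sine abs less fins nats conds :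
  sat e (fSolvable reals mul sine abs less fins nats conds) <->
  solvable reals mul sine abs less fins nats conds.
Proof.
  unfold fSolvable, solvable; cbn [sat tm_eval scons].
  setoid_rewrite sat_fSolves; setoid_rewrite sat_fPair; cbn [tm_eval scons].
  reflexivity.
Qed.

Lemma fm_ok_fSolvable {C : Type} (P : C -> Prop) reals mul sine abs less fins nats conds :
  P reals -> P mul -> P sine -> P abs -> P less -> P fins -> P nats -> P conds ->
  fm_ok P 0 (fSolvable reals mul sine abs less fins nats conds).
Proof.
  intros; unfold fSolvable, fSolves, fPair, fSing, fUpair, fApp, fApp2; simpl.
  repeat split; auto; lia.
Qed.

Lemma fm_ok_fPair {C : Type} (P : C -> Prop) x a b :
  P x -> P a -> P b -> fm_ok P 0 (fPair (tcst x) (tcst a) (tcst b)).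
Proof. intros; unfold fPair, fSing, fUpair; simpl; repeat split; auto; lia. Qed.

Section Transfer.
Context {X Y : Type} (star : HS X -> HS Y) (Htr : transfer star).

Lemma transfer_mem x s : inV x -> inV s -> mem x s -> mem (star x) (star s).
Proof. intros Hx Hs; exact (proj1 (Htr (fMem (tcst x) (tcst s)) (conj Hx Hs))). Qed.

Lemma transfer_kpair x a b : inV x -> inV a -> inV b ->
  eqS x (kpair a b) -> eqS (star x) (kpair (star a) (star b)).
Proof.
  intros Hx Ha Hb.
  pose proof (Htr (fPair (tcst x) (tcst a) (tcst b)) (fm_ok_fPair _ _ _ _ Hx Ha Hb)) as T.
  change (fm_map star (fPair (tcst x) (tcst a) (tcst b)))
    with (fPair (tcst (star x)) (tcst (star a)) (tcst (star b))) in T.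
  rewrite !sat_fPair in T; exact (proj1 T).
Qed.

Lemma transfer_solvable reals mul sine abs less fins nats conds :
  inV reals -> inV mul -> inV sine -> inV abs -> inV less ->
  inV fins -> inV nats -> inV conds ->
  solvable reals mul sine abs less fins nats conds ->
  solvable (star reals) (star mul) (star sine) (star abs) (star less)
           (star fins) (star nats) (star conds).
Proof.
  intros; rewrite <- (sat_fSolvable (fun _ => emptyS)).
  change (sat (fun _ => emptyS)
            (fm_map star (fSolvable reals mul sine abs less fins nats conds))).
  apply Htr; [apply fm_ok_fSolvable; assumption|].
  apply sat_fSolvable; assumption.
Qed.

End Transfer.

Section Levels.
Context {A : Type}.

Lemma Vn_S (x : HS A) n : mem x (Vn A n) -> mem x (Vn A (S n)).
Proof. intros [j Hj]; exists (inl j); exact Hj. Qed.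

Lemma Vn_le (x : HS A) n m : (n <= m)%nat -> mem x (Vn A n) -> mem x (Vn A m).
Proof. induction 1; auto using Vn_S. Qed.

Lemma Vn_atom (a : A) : mem (atom a) (Vn A 0).
Proof. exists a; reflexivity. Qed.

Lemma Vn_hset {I : Type} (f : I -> HS A) n :
  (forall i, mem (f i) (Vn A n)) -> mem (hset f) (Vn A (S n)).
Proof.
  intros H; exists (inr (fun j => exists i, eqS (f i) (lvl A n j))); cbn [lvl eqS]; split.
  - intro i; destruct (H i) as [j Hj]; exists (exist _ j (ex_intro _ i Hj)); exact Hj.
  - intros [j [i Hi]]; exists i; exact Hi.
Qed.

Lemma Vn_trans (x y : HS A) n : mem x (Vn A n) -> mem y x -> mem y (Vn A n).
Proof.
  intros [j Hj] Hy; apply (mem_eqS_r _ _ _ Hj) in Hy; clear x Hj.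
  induction n as [|n IH]; simpl in *; [destruct Hy|].
  destruct j as [j|P].
  - apply Vn_S, (IH j), Hy.
  - destruct Hy as [[j Pj] Hj]; apply Vn_S; exists j; exact Hj.
Qed.

Lemma Vn_sing (a : HS A) n : mem a (Vn A n) -> mem (sing a) (Vn A (S n)).
Proof. intros; apply Vn_hset; intros []; auto. Qed.

Lemma Vn_upair (a b : HS A) n :
  mem a (Vn A n) -> mem b (Vn A n) -> mem (upair a b) (Vn A (S n)).
Proof. intros; apply Vn_hset; intros [|]; auto. Qed.

Lemma Vn_kpair (a b : HS A) n :
  mem a (Vn A n) -> mem b (Vn A n) -> mem (kpair a b) (Vn A (S (S n))).
Proof. intros; apply Vn_upair; [apply Vn_sing|apply Vn_upair]; auto. Qed.

Lemma Vn_Pfin (s : HS A) n : mem s (Vn A n) -> mem (Pfin s) (Vn A (S (S n))).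
Proof.
  intros H; destruct s as [a|I f]; simpl Pfin.
  - apply Vn_sing, (Vn_le _ 1); [lia|]; apply Vn_hset; intros [].
  - apply Vn_hset; intro l; apply Vn_hset; intros [i Hi]; simpl.
    apply Vn_trans with (hset f); [exact H|exists i; apply eqS_refl].
Qed.

Lemma inV_Pfin (s : HS A) : inV s -> inV (Pfin s).
Proof. intros [n Hn]; exists (S (S n)); apply Vn_Pfin, Hn. Qed.

End Levels.

(** * Simultaneous Diophantine approximation *)

Lemma pigeonhole_nat n (f : nat -> nat) : (forall j, (j <= n)%nat -> (f j < n)%nat) ->
  exists i j, (i < j <= n)%nat /\ f i = f j.
Proof.
  intros Hf.
  apply NNPP; intros Hno.
  assert (Hnd : NoDup (map f (seq 0 (S n)))).
  { apply (NoDup_nth _ (f 0%nat)); rewrite length_map, length_seq.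
    intros i j Hi Hj E; rewrite !map_nth, !seq_nth in E by lia.
    destruct (Nat.lt_total i j) as [Hij|[Hij|Hij]]; [|exact Hij|];
      exfalso; apply Hno; [exists i, j|exists j, i]; split; auto; lia. }
  assert (Hincl : incl (map f (seq 0 (S n))) (seq 0 n)).
  { intros y Hy; apply in_map_iff in Hy as [j [<- Hj]]; apply in_seq in Hj.
    apply in_seq; specialize (Hf j); lia. }
  pose proof (NoDup_incl_length Hnd Hincl) as Hlen.
  rewrite length_map, !length_seq in Hlen; lia.
Qed.

Definition near_int (y d : R) : Prop := exists m : Z, Rabs (y - IZR m) < d.

Lemma near_int_sub y1 y2 d1 d2 :
  near_int y1 d1 -> near_int y2 d2 -> near_int (y1 - y2) (d1 + d2).
Proof.
  intros [m1 H1] [m2 H2]; exists (m1 - m2)%Z; rewrite minus_IZR.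
  replace (y1 - y2 - (IZR m1 - IZR m2)) with ((y1 - IZR m1) - (y2 - IZR m2)) by ring.
  eapply Rle_lt_trans; [apply Rabs_triang|]; rewrite Rabs_Ropp; lra.
Qed.

Definition bucket (N : nat) (y : R) : nat := Z.to_nat (Int_part (INR N * y)).

Lemma Int_part_bounds r : IZR (Int_part r) <= r < IZR (Int_part r) + 1.
Proof. destruct (base_Int_part r); lra. Qed.

Lemma Int_part_nonneg r : 0 <= r -> (0 <= Int_part r)%Z.
Proof.
  intros Hr; pose proof (Int_part_bounds r).
  assert (-1 < Int_part r)%Z by (apply lt_IZR; simpl; lra); lia.
Qed.

Lemma bucket_lt N y : (0 < N)%nat -> 0 <= y < 1 -> (bucket N y < N)%nat.
Proof.
  intros HN Hy; unfold bucket.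
  assert (HN' : 0 < INR N) by (apply lt_0_INR; exact HN).
  pose proof (Int_part_bounds (INR N * y)).
  assert (INR N * y < INR N) by nra.
  assert (Int_part (INR N * y) < Z.of_nat N)%Z by (apply lt_IZR; rewrite <- INR_IZR_INZ; lra).
  lia.
Qed.

Lemma bucket_close N y1 y2 : (0 < N)%nat -> 0 <= y1 -> 0 <= y2 ->
  bucket N y1 = bucket N y2 -> Rabs (y2 - y1) < / INR N.
Proof.
  intros HN Hy1 Hy2 E; unfold bucket in E.
  assert (HN' : 0 < INR N) by (apply lt_0_INR; exact HN).
  pose proof (Int_part_nonneg (INR N * y1) ltac:(nra)).
  pose proof (Int_part_nonneg (INR N * y2) ltac:(nra)).
  assert (Ez : Int_part (INR N * y1) = Int_part (INR N * y2)) by lia.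
  pose proof (Int_part_bounds (INR N * y1)) as B1; pose proof (Int_part_bounds (INR N * y2)).
  rewrite Ez in B1.
  apply Rabs_def1; apply Rmult_lt_reg_l with (INR N); auto;
    [rewrite Rinv_r by lra|replace (INR N * - / INR N) with (-1) by (field; lra)]; lra.
Qed.

Lemma frac_pigeonhole x N (s : nat -> nat) : (0 < N)%nat ->
  exists i j, (i < j <= N)%nat /\ near_int ((INR (s j) - INR (s i)) * x) (/ INR N).
Proof.
  intros HN; set (y := fun j => frac_part (INR (s j) * x)).
  assert (Hy : forall j, 0 <= y j < 1) by (intro j; unfold y; pose proof (base_fp (INR (s j) * x)); lra).
  destruct (pigeonhole_nat N (fun j => bucket N (y j))) as [i [j [Hij E]]].
  { intros j _; apply bucket_lt; auto. }
  exists i, j; split; [exact Hij|].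
  exists (Int_part (INR (s j) * x) - Int_part (INR (s i) * x))%Z; rewrite minus_IZR.
  pose proof (bucket_close N (y i) (y j) HN (proj1 (Hy i)) (proj1 (Hy j)) E) as Hc.
  unfold y, frac_part in Hc.
  replace ((INR (s j) - INR (s i)) * x -
           (IZR (Int_part (INR (s j) * x)) - IZR (Int_part (INR (s i) * x))))
    with (INR (s j) * x - IZR (Int_part (INR (s j) * x)) -
          (INR (s i) * x - IZR (Int_part (INR (s i) * x)))) by ring.
  exact Hc.
Qed.

Lemma gapped_sequence (P : nat -> Prop) M :
  (forall M', exists k, (M' < k)%nat /\ P k) ->
  exists s : nat -> nat, (forall j, P (s j)) /\
    forall i j, (i < j)%nat -> (s i + M < s j)%nat.
Proof.
  intros HP; destruct (choice _ HP) as [g Hg].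
  set (s := fix s j := match j with O => g M | S j' => g (s j' + M)%nat end).
  exists s; split.
  - intros [|j]; apply Hg.
  - assert (Hstep : forall j, (s j + M < s (S j))%nat) by (intro j; apply Hg).
    intros i j Hij; induction Hij as [|j Hij IH]; [apply Hstep|specialize (Hstep j); lia].
Qed.

Lemma simultaneous_approximation (L : list R) d (M : nat) : 0 < d ->
  exists k : nat, (M < k)%nat /\ forall x, In x L -> near_int (INR k * x) d.
Proof.
  revert d M; induction L as [|x L IH]; intros d M Hd.
  - exists (S M); split; [lia|intros x []].
  - destruct (gapped_sequence (fun k => forall z, In z L -> near_int (INR k * z) (d / 2)) M)
      as [s [Hs Hgap]]; [intro M'; apply IH; lra|].
    destruct (archimed_cor1 (d / 2)) as [N [HN HN0]]; [lra|].
    destruct (frac_pigeonhole x N s HN0) as [i [j [Hij Hx]]].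
    pose proof (Hgap i j ltac:(lia)).
    exists (s j - s i)%nat; split; [lia|]; rewrite minus_INR by lia.
    intros z [<-|Hz].
    + destruct Hx as [m Hm]; exists m; lra.
    + replace ((INR (s j) - INR (s i)) * z) with (INR (s j) * z - INR (s i) * z) by ring.
      replace d with (d / 2 + d / 2) by field; apply near_int_sub; auto.
Qed.

Lemma abs_sin_le x : Rabs (sin x) <= Rabs x.
Proof.
  assert (Hpos : forall y, 0 < y -> Rabs (sin y) <= y).
  { intros y Hy; pose proof (sin_lt_x y Hy); pose proof (SIN_bound y).
    apply Rabs_le; split; [|lra].
    destruct (Rle_dec y PI); [pose proof (sin_ge_0 y ltac:(lra) r); lra|].
    pose proof PI2_3_2; lra. }
  destruct (Rtotal_order x 0) as [H|[H|H]].
  - rewrite (Rabs_left x), <- Rabs_Ropp, <- sin_neg by lra; apply Hpos; lra.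
  - subst; rewrite sin_0; lra.
  - rewrite (Rabs_right x) by lra; apply Hpos; lra.
Qed.

Lemma sin_period_Z y m : sin (y - 2 * IZR m * PI) = sin y.
Proof.
  destruct m as [|p|p].
  - simpl; f_equal; ring.
  - rewrite <- (sin_period _ (Pos.to_nat p)); f_equal.
    rewrite INR_IZR_INZ, positive_nat_Z; ring.
  - rewrite <- (sin_period y (Pos.to_nat p)); f_equal.
    rewrite INR_IZR_INZ, positive_nat_Z, <- Pos2Z.opp_pos, opp_IZR; ring.
Qed.

Lemma abs_sin_lt_of_near_int k t d :
  near_int (INR k * (t / (2 * PI))) (d / (2 * PI)) -> Rabs (sin (INR k * t)) < d.
Proof.
  intros [m Hm]; pose proof PI2_3_2.
  rewrite <- (sin_period_Z _ m); eapply Rle_lt_trans; [apply abs_sin_le|].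
  replace (INR k * t - 2 * IZR m * PI)
    with (2 * PI * (INR k * (t / (2 * PI)) - IZR m)) by (field; lra).
  rewrite Rabs_mult, (Rabs_right (2 * PI)) by lra.
  apply Rmult_lt_compat_l with (r := 2 * PI) in Hm; [|lra].
  replace (2 * PI * (d / (2 * PI))) with d in Hm by (field; lra); exact Hm.
Qed.

Lemma uniform_bounds (P : list (R * R)) : (forall p, In p P -> 0 < snd p) ->
  exists d (M : nat), 0 < d /\ forall p, In p P -> d <= snd p /\ Rabs (fst p) < INR M.
Proof.
  induction P as [|[t e] P IH]; intros H.
  - exists 1, 0%nat; split; [lra|intros p []].
  - destruct IH as [d [M [Hd HM]]]; [intros; apply H; right; auto|].
    assert (He : 0 < e) by (apply (H (t, e)); left; auto).
    destruct (INR_unbounded (Rabs t)) as [M0 HM0].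
    exists (Rmin d e), (M + M0)%nat; split; [apply Rmin_pos; auto|].
    rewrite plus_INR; pose proof (pos_INR M); pose proof (pos_INR M0).
    intros p [<-|Hp]; simpl.
    + split; [apply Rmin_r|lra].
    + destruct (HM p Hp); split; [eapply Rle_trans; [apply Rmin_l|auto]|lra].
Qed.

Lemma sin_conditions_solvable (P : list (R * R)) : (forall p, In p P -> 0 < snd p) ->
  exists k : nat, forall p, In p P ->
    Rabs (fst p) < INR k /\ Rabs (sin (INR k * fst p)) < snd p.
Proof.
  intros HP; destruct (uniform_bounds P HP) as [d [M [Hd HM]]].
  pose proof PI_RGT_0.
  destruct (simultaneous_approximation (map (fun p => fst p / (2 * PI)) P) (d / (2 * PI)) M)
    as [k [Hk Hnear]]; [apply Rdiv_lt_0_compat; lra|].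
  exists k; intros p Hp; destruct (HM p Hp) as [Hd' Ht].
  apply lt_INR in Hk; split; [lra|].
  apply Rlt_le_trans with d; [|exact Hd'].
  apply abs_sin_lt_of_near_int, Hnear, (in_map (fun p => fst p / (2 * PI))), Hp.
Qed.

Section RealConditions.
Context {X : Type} (rX : R -> X).

Definition RealS : HS X := hset (fun r : R => rS rX r).
Definition condS (t e : R) : HS X := kpair (rS rX t) (rS rX e).
Definition CondS : HS X :=
  hset (fun p : {p : R * R | 0 < snd p} => condS (fst (proj1_sig p)) (snd (proj1_sig p))).

Lemma mem_condS_CondS t e : 0 < e -> mem (condS t e) CondS.
Proof. intros He; exists (exist _ (t, e) He); apply eqS_refl. Qed.

Lemma Vn_rS r : mem (rS rX r) (Vn X 0).
Proof. apply Vn_atom. Qed.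

Lemma inV_rS r : inV (rS rX r).
Proof. exists 0%nat; apply Vn_rS. Qed.

Lemma inV_RealS : inV RealS.
Proof. exists 1%nat; apply Vn_hset; intro; apply Vn_rS. Qed.

Lemma inV_NatS : inV (NatS rX).
Proof. exists 1%nat; apply Vn_hset; intro; apply Vn_rS. Qed.

Lemma inV_condS t e : inV (condS t e).
Proof. exists 2%nat; apply Vn_kpair; apply Vn_rS. Qed.

Lemma inV_CondS : inV CondS.
Proof. exists 3%nat; apply Vn_hset; intro; apply Vn_kpair; apply Vn_rS. Qed.

Lemma inV_graph1 f : inV (graph1 rX f).
Proof. exists 3%nat; apply Vn_hset; intro; apply Vn_kpair; apply Vn_rS. Qed.

Lemma inV_graph2 g : inV (graph2 rX g).
Proof.
  exists 5%nat; apply Vn_hset; intro; apply Vn_kpair.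
  - apply Vn_kpair; apply Vn_rS.
  - apply (Vn_le _ 0); [lia|apply Vn_rS].
Qed.

Lemma inV_ltS : inV (ltS rX).
Proof. exists 3%nat; apply Vn_hset; intro; apply Vn_kpair; apply Vn_rS. Qed.

Hypothesis rX_inj : forall r s : R, rX r = rX s -> r = s.

Lemma eqS_rS r s : eqS (rS rX r) (rS rX s) -> r = s.
Proof. apply rX_inj. Qed.

Lemma solves_std k t e (a b : HS X) :
  eqS a (rS rX t) -> eqS b (rS rX e) -> Rabs t < INR k -> Rabs (sin (INR k * t)) < e ->
  solves RealS (mulS rX) (sinS rX) (absS rX) (ltS rX) (rS rX (INR k)) a b.
Proof.
  intros Ha Hb Ht Hs; split; [|split].
  - intros E; assert (INR k = t) by (apply eqS_rS; eapply eqS_trans; eauto).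
    pose proof (Rle_abs t); lra.
  - exists (rS rX (INR k * t)); split; [exists (INR k * t); apply eqS_refl|].
    exists (rS rX (sin (INR k * t))); split; [exists (sin (INR k * t)); apply eqS_refl|].
    split.
    + exists (INR k, t); apply eqS_kpair; [apply eqS_kpair|]; auto using eqS_refl.
    + exists (INR k * t); apply eqS_refl.
  - intros u _ v _ [[k' t'] Hm] [x Hsn]; cbn [fst snd] in Hm.
    apply kpair_inj in Hm as [Hm Hu]; apply kpair_inj in Hm as [Hk Ht'].
    apply kpair_inj in Hsn as [Hu' Hv].
    apply eqS_rS in Hk; subst k'.
    assert (t' = t) by (apply eqS_rS; eapply eqS_trans; [apply eqS_sym|]; eauto); subst t'.
    assert (x = INR k * t) by (apply eqS_rS; eapply eqS_trans; [apply eqS_sym|]; eauto); subst x.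
    exists (rS rX (Rabs (sin (INR k * t)))).
    split; [eexists; apply eqS_refl|split].
    + exists (sin (INR k * t)); apply eqS_kpair; [exact Hv|apply eqS_refl].
    + exists (exist (fun p : R * R => fst p < snd p) (Rabs (sin (INR k * t)), e) Hs).
      apply eqS_kpair; [apply eqS_refl|exact Hb].
Qed.

Lemma Pfin_finite (s F : HS X) : mem F (Pfin s) ->
  exists l : list (HS X), forall c, mem c F -> exists z, In z l /\ eqS c z.
Proof.
  destruct s as [a|I f]; simpl Pfin.
  - intros H; apply mem_sing in H; exists nil; intros c Hc.
    apply (mem_eqS_r _ _ _ H) in Hc; destruct Hc as [[] _].
  - intros [l Hl]; exists (map f l); intros c Hc.
    apply (mem_eqS_r _ _ _ Hl) in Hc; destruct Hc as [[i Hi] Hc].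
    exists (f i); split; [apply in_map; exact Hi|exact Hc].
Qed.

Lemma conditions_in_list (l : list (HS X)) : exists P : list (R * R),
  (forall p, In p P -> 0 < snd p) /\
  forall z, In z l -> mem z CondS -> exists p, In p P /\ eqS z (condS (fst p) (snd p)).
Proof.
  induction l as [|z l [P [HP HPl]]].
  - exists nil; split; [intros p []|intros z []].
  - destruct (classic (mem z CondS)) as [[[p Hp] Hzp]|Hz].
    + exists (p :: P); split.
      * intros q [<-|Hq]; auto.
      * intros z' [<-|Hz'] Hc; [exists p; split; [left|]; auto|].
        destruct (HPl z' Hz' Hc) as [q [Hq Eq]]; exists q; split; [right|]; auto.
    + exists P; split; [exact HP|].
      intros z' [<-|Hz'] Hc; [contradiction|auto].
Qed.

Lemma solvable_std (s : HS X) :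
  solvable RealS (mulS rX) (sinS rX) (absS rX) (ltS rX) (Pfin s) (NatS rX) CondS.
Proof.
  intros F HF.
  destruct (Pfin_finite s F HF) as [l Hl].
  destruct (conditions_in_list l) as [P [HP HPl]].
  destruct (sin_conditions_solvable P HP) as [k Hk].
  exists (rS rX (INR k)); split; [exists k; apply eqS_refl|].
  intros c Hc HcC y _ a _ b _ Hcab.
  destruct (Hl c Hc) as [z [Hz Ecz]].
  destruct (HPl z Hz (mem_eqS_l _ _ _ Ecz HcC)) as [[t e] [Hp Ez]].
  assert (E : eqS (kpair a b) (condS t e)).
  { eapply eqS_trans; [apply eqS_sym, Hcab|]; eapply eqS_trans; eauto. }
  apply kpair_inj in E as [Ea Eb].
  destruct (Hk _ Hp); apply solves_std with t e; auto.
Qed.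

End RealConditions.

Section Enlargement.
Context {X Y : Type} (rX : R -> X) (iX : X -> Y) (star : HS X -> HS Y).
Hypothesis rX_inj : forall r s : R, rX r = rX s -> r = s.
Hypothesis star_enl : enlargement iX star.

Lemma uniform_solution : exists k, mem k (star (NatS rX)) /\
  forall t e, 0 < e ->
    solves (star (RealS rX)) (star (mulS rX)) (star (sinS rX)) (star (absS rX)) (star (ltS rX))
           k (star (rS rX t)) (star (rS rX e)).
Proof.
  destruct star_enl as [[_ [_ [_ [_ [_ Htr]]]]] Hbig].
  destruct (Hbig (CondS rX) (inV_CondS rX)) as [B [[s [Hs HB]] Hsub]];
    [intros [a Ha]; exact Ha|].
  destruct (transfer_solvable star Htr _ _ _ _ _ _ _ _
              (inV_RealS rX) (inV_graph2 rX _) (inV_graph1 rX _) (inV_graph1 rX _)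
              (inV_ltS rX) (inV_Pfin s Hs) (inV_NatS rX) (inV_CondS rX)
              (solvable_std rX rX_inj s) B HB) as [k [Hk Hsol]].
  exists k; split; [exact Hk|]; intros t e He.
  assert (Hpair : eqS (star (condS rX t e)) (kpair (star (rS rX t)) (star (rS rX e))))
    by (apply transfer_kpair; auto using inV_condS, inV_rS, eqS_refl).
  apply (Hsol (star (condS rX t e))) with (y := upair (star (rS rX t)) (star (rS rX e))).
  - apply Hsub; exists (exist _ (t, e) He); apply eqS_refl.
  - apply transfer_mem; auto using inV_condS, inV_CondS, mem_condS_CondS.
  - eapply mem_eqS_r; [apply eqS_sym, Hpair|apply mem_upair_r].
  - apply mem_upair_l.
  - apply mem_upair_r.
  - exact Hpair.
Qed.

End Enlargement.

Theorem mainTheorem11 (X Y : Type) (rX : R -> X) (iX : X -> Y) (star : HS X -> HS Y) :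
  (forall r s : R, rX r = rX s -> r = s) ->
  enlargement iX star ->
  exists k : HS Y,
    mem k (star (NatS rX)) /\
    ~ (exists n : nat, eqS k (star (rS rX (INR n)))) /\
    forall t : R, exists u v : HS Y,
      appS (star (mulS rX)) (kpair k (star (rS rX t))) u /\
      appS (star (sinS rX)) u v /\
      infinitesimal rX star v.
Proof.
  intros rX_inj star_enl.
  destruct (uniform_solution rX iX star rX_inj star_enl) as [k [Hk Hsol]].
  exists k; split; [exact Hk|split].
  - intros [n Hn]; exact (proj1 (Hsol (INR n) 1 Rlt_0_1) Hn).
  - intros t; destruct (Hsol t 1 Rlt_0_1) as [_ [[u [Hu [v [Hv [Hm Hs]]]]] _]].
    exists u, v; split; [exact Hm|split; [exact Hs|]].
    intros n Hn.
    destruct (Hsol t (/ INR n)) as [_ [_ Hsmall]]; [apply Rinv_0_lt_compat, lt_0_INR, Hn|].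
    destruct (Hsmall u Hu v Hv Hm Hs) as [w [_ Hw]]; exists w; exact Hw.
Qed.
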